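(* Let $l(x)=x\,(1-2\Phi(-x))+2\phi(x)$. Then for all $x>0$, $$\frac{l(x)\,\big(\tfrac12-\Phi(-x)\big)}{x}<\frac12.$$
   Context: $\phi$ and $\Phi$ denote the standard normal density and cumulative distribution function. *)

From Stdlib Require Import Reals.
From Coquelicot Require Import Coquelicot.
Open Scope R_scope.

Definition phi (x : R) : R := exp (- x ^ 2 / 2) / sqrt (2 * PI).

Definition Phi (x : R) : R :=
  RInt_gen phi (Rbar_locally m_infty) (at_point x).

Definition l (x : R) : R := x * (1 - 2 * Phi (- x)) + 2 * phi x.

From Stdlib Require Import Reals Lra.
From Coquelicot Require Import Coquelicot.
From HB Require Import structures.
From mathcomp Require all_boot all_order all_algebra.
From mathcomp Require all_classical all_reals all_analysis.
From mathcomp Require Rstruct Rstruct_topology.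
Open Scope R_scope.

(* Write [t = Phi (-x)] and [p = phi x].  Since
   [x / 2 - l x * (1/2 - t) = 2 t (x (1 - t) + p) - p], the claim is [p < 2 t (x (1 - t) + p)].

   For [x <= 0.88] write [t = 1/2 - A] with [0 <= A <= x / sqrt (2 PI)]; the claim becomes
   [4 x A^2 + 4 p A < x], and [4 x A^2 + 4 p A <= 2 x (x^2 + exp (-x^2/2)) / PI < x] because
   [exp (-x^2/2) (1 + x^2/2) <= 1] and [PI > 3].

   For [x >= 0.88] use Gordon's bound [t >= L = x p / (1 + x^2)], which holds because [t - L]
   is nonincreasing in [x] and tends to [0] at [+oo].  The right-hand side is nondecreasing in
   [t] on [[0, 1/2]], and at [t = L] it exceeds [p] by [p (x^4 - 1 + 2 x p) / (1 + x^2)^2],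
   which is positive since [1 - x^4 < 2 x p] for [x >= 0.88]. *)

(* [Phi (+oo) = 1] is the Gaussian integral, which only mathcomp-analysis provides (over any
   [realType], Stdlib's [R] included); it is transferred here to Stdlib and Coquelicot. *)
Module GaussIntegral.
Import mathcomp.boot.all_boot mathcomp.order.all_order mathcomp.algebra.all_algebra.
Import mathcomp.classical.all_classical mathcomp.reals.all_reals mathcomp.analysis.all_analysis.
Import mathcomp.reals_stdlib.Rstruct mathcomp.analysis_stdlib.Rstruct_topology.
Import Order.TTheory GRing.Theory Num.Theory.
Import numFieldNormedType.Exports.
Local Open Scope classical_set_scope.
Local Open Scope ring_scope.

Lemma derivable_pt_lim_derive1 (f : R -> R) (x : R) :
  derivable (f : R^o -> R^o) x 1 -> derivable_pt_lim f x (derive1 (f : R^o -> R^o) x).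
Proof.
move=> /cvg_ex [l fl]; rewrite derive1E /derive (cvg_lim _ fl) //.
move/cvgrPdist_lt : fl => fl e e0.
have /fl /nbhs_ballP [d /= d0 fd] : 0 < e by apply/RltP.
have d0' : (0 < d)%coqR by apply/RltP.
exists (mkposreal d d0') => h h0 hd.
have /fd : ball (0 : R^o) d h by rewrite /ball /= sub0r normrN -RabsE; apply/RltP.
move=> /(_ (introN eqP h0)) /RltP; rewrite -RabsE /= -Rabs_Ropp.
move=> lt; apply: Rle_lt_trans lt; apply: Req_le; congr Rabs.
change ((f (x + h) - f x) / h - l = - (l - / h * (f (h * 1 + x) - f x)))%coqR.
rewrite Rmult_1_r (Rplus_comm h x); field; exact: h0.
Qed.

(* Both [atan]s vanish at [0] and have derivative [1 / (1 + x^2)]; comparing them at [1]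
   identifies mathcomp's [pi] with Stdlib's [PI]. *)
Lemma atanE (x : R) : atan x = Ratan.atan x.
Proof.
have datan y : derivable_pt_lim (fun z => atan z - Ratan.atan z)%coqR y 0%coqR.
  rewrite -(Rminus_diag (/ (1 + y ^ 2))%coqR).
  apply: derivable_pt_lim_minus; last exact: derivable_pt_lim_atan.
  by have := derivable_pt_lim_derive1 _ _ (@derivable_atan R y); rewrite derive1_atan RinvE RpowE.
have datan_eq a b : (a < b)%coqR -> (atan b - Ratan.atan b = atan a - Ratan.atan a)%coqR.
  move=> ab; have [c [Hc _]] := MVT_cor2 _ (fun _ => 0%coqR) a b ab (fun c _ => datan c).
  lra.
have datan0 : (atan 0 - Ratan.atan 0 = 0)%coqR by rewrite atan0 Ratan.atan_0 Rminus_diag.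
suff : (atan x - Ratan.atan x = 0)%coqR by lra.
case: (Rtotal_order x 0) => [x0|[->|x0]] //.
  by rewrite -(datan_eq x 0 x0).
by rewrite (datan_eq 0 x x0).
Qed.

Lemma piE : pi = PI :> R.
Proof.
have := @atan1 R; rewrite atanE Ratan.atan_1 -INRE INR_IZR_INZ /= -RdivE => quarter.
by apply: (Rmult_eq_reg_r (/ 4)%coqR); [exact: esym quarter | lra].
Qed.

(* Integrating from [-oo] rather than [0] makes the primitive differentiable at [0] too, as
   [is_RInt_derive] requires on [[0, w]]. *)
Definition gauss_primitive (x : R) : R :=
  \int[lebesgue_measure]_(t in `]-oo, x]) gauss_fun t.

Lemma derivable_pt_lim_gauss_primitive (x : R) :
  derivable_pt_lim gauss_primitive x (exp (- x ^ 2))%coqR.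
Proof.
have intg : lebesgue_measure.-integrable `]-oo, x + 1] (EFin \o @gauss_fun R).
  exact: integrableS (@integrableT_gauss R).
have xx1 : x < x + 1 by rewrite ltrDl.
have [|dF dFE] := continuous_FTC1 xx1 intg _ (@continuous_gauss_fun R x).
  by rewrite /= ltNyr.
have -> : exp (- x ^ 2)%coqR = gauss_fun x by rewrite /gauss_fun RexpE RpowE.
rewrite -dFE; exact: derivable_pt_lim_derive1.
Qed.

Lemma gauss_primitive_increment (y : R) : (0 <= y)%coqR ->
  (gauss_primitive y - gauss_primitive 0)%coqR = gauss_integral_proof.integral0_gauss y.
Proof.
move=> /RleP y0.
rewrite RminusE /gauss_primitive (@Rintegral_itvB R gauss_fun _ (BRight y) 0) //.
- by rewrite Rintegral_itv_obnd_cbnd //; exact: integrableS (@integrableT_gauss R).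
- exact: integrableS (@integrableT_gauss R).
Qed.

Lemma cvg_integral0_gauss :
  gauss_integral_proof.integral0_gauss x @[x --> +oo] --> Num.sqrt (pi : R) / 2.
Proof.
have : Num.sqrt (gauss_integral_proof.integral0_gauss x ^+ 2) @[x --> +oo]
    --> Num.sqrt ((pi : R) / 4).
  apply: continuous_cvg; first exact: sqrt_continuous.
  exact: gauss_integral_proof.cvg_integral0_gauss_sqr.
rewrite sqrtrM ?pi_ge0 // sqrtrV // (_ : 4 = 2 ^+ 2); last by rewrite expr2 -natrM.
rewrite sqrtr_sqr ger0_norm //.
by under eq_fun do rewrite sqrtr_sqr ger0_norm ?gauss_integral_proof.integral0_gauss_ge0 //.
Qed.

Lemma is_lim_gauss_primitive :
  is_lim (fun y => gauss_primitive y - gauss_primitive 0)%coqR p_infty (sqrt PI / 2)%coqR.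
Proof.
apply/is_lim_spec => eps.
move/cvgrPdist_lt : cvg_integral0_gauss => /(_ (pos eps)) [].
  by apply/RltP; exact: cond_pos.
move=> M [_ HM]; exists (Num.max M 0) => y /RltP; rewrite gt_max => /andP [My y0].
rewrite /= gauss_primitive_increment; last exact/RleP/ltW.
rewrite RminusE RdivE RabsE RsqrtE -piE distrC; apply/RltP.
exact: HM.
Qed.

End GaussIntegral.

Lemma sqrt_2PI_gt0 : 0 < sqrt (2 * PI).
Proof. apply sqrt_lt_R0; generalize PI_RGT_0; lra. Qed.

Lemma exp_ineq1_le_opp u : exp (- u) * (1 + u) <= 1.
Proof.
rewrite exp_Ropp.
assert (Hu := exp_ineq1_le u); assert (Hpos := exp_pos u).
apply (Rmult_le_reg_l (exp u)); [exact Hpos|].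
rewrite <- Rmult_assoc, Rinv_r by lra; lra.
Qed.

Lemma exp_opp_le1 u : 0 <= u -> exp (- u) <= 1.
Proof. intro Hu; generalize (exp_ineq1_le_opp u) (exp_pos (- u)); nra. Qed.

Lemma exp_opp_ge_pow4 u : u <= 4 -> (1 - u / 4) ^ 4 <= exp (- u).
Proof.
intro Hu.
replace (- u) with (- (u / 4) + (- (u / 4) + (- (u / 4) + - (u / 4)))) by field.
rewrite !exp_plus; simpl; rewrite Rmult_1_r.
assert (E := exp_ineq1_le (- (u / 4))); assert (E0 : 0 <= 1 - u / 4) by lra.
repeat apply Rmult_le_compat; repeat apply Rmult_le_pos; lra.
Qed.

Lemma phi_gt0 x : 0 < phi x.
Proof. apply Rdiv_lt_0_compat; [apply exp_pos | apply sqrt_2PI_gt0]. Qed.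

Lemma phi_opp x : phi (- x) = phi x.
Proof. unfold phi; do 3 f_equal; ring. Qed.

Lemma phi_eq x : phi x = / sqrt (2 * PI) * exp (- (x ^ 2 / 2)).
Proof. unfold phi, Rdiv; rewrite Rmult_comm; do 3 f_equal; field. Qed.

Lemma phi_le_inv_sqrt_2PI x : phi x <= / sqrt (2 * PI).
Proof.
rewrite phi_eq.
assert (Hc : 0 < / sqrt (2 * PI)) by apply Rinv_0_lt_compat, sqrt_2PI_gt0.
assert (exp (- (x ^ 2 / 2)) <= 1) by (apply exp_opp_le1; nra).
nra.
Qed.

Lemma is_derive_phi x : is_derive phi x (- x * phi x).
Proof.
unfold phi; auto_derive.
- generalize sqrt_2PI_gt0; lra.
- replace (- (x * (x * 1)) * / 2) with (- x ^ 2 / 2) by field.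
  field; generalize sqrt_2PI_gt0; lra.
Qed.

Lemma continuous_phi x : continuous phi x.
Proof.
apply (ex_derive_continuous (K := R_AbsRing) (V := R_NormedModule)).
eexists; apply is_derive_phi.
Qed.

Lemma ex_RInt_phi a b : ex_RInt phi a b.
Proof.
apply (ex_RInt_continuous (V := R_CompleteNormedModule)).
intros z _; apply continuous_phi.
Qed.

Definition Phi0 (w : R) : R := RInt phi 0 w.

Lemma is_derive_Phi0 w : is_derive Phi0 w (phi w).
Proof.
apply (is_derive_RInt phi Phi0 0).
- apply filter_forall; intro b; apply (RInt_correct (V := R_CompleteNormedModule)), ex_RInt_phi.
- apply continuous_phi.
Qed.

Lemma Phi0_opp w : Phi0 (- w) = - Phi0 w.
Proof.
unfold Phi0.
assert (E := RInt_comp_lin (V := R_CompleteNormedModule) phi (-1) 0 0 w (ex_RInt_phi _ _)).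
replace (-1 * 0 + 0) with 0 in E by ring; replace (-1 * w + 0) with (- w) in E by ring.
rewrite <- E, <- (RInt_opp (V := R_CompleteNormedModule)) by apply ex_RInt_phi.
apply RInt_ext; intros y _.
replace (-1 * y + 0) with (- y) by ring.
rewrite phi_opp; unfold scal; simpl; unfold mult, opp; simpl; ring.
Qed.

Lemma Phi0_ge0 x : 0 <= x -> 0 <= Phi0 x.
Proof.
intro Hx; apply RInt_ge_0; [exact Hx | apply ex_RInt_phi |].
intros y _; left; apply phi_gt0.
Qed.

Lemma Phi0_le x : 0 <= x -> Phi0 x <= x / sqrt (2 * PI).
Proof.
intro Hx.
replace (x / sqrt (2 * PI)) with (RInt (fun _ => / sqrt (2 * PI)) 0 x).
- apply RInt_le; [exact Hx | apply ex_RInt_phi | apply ex_RInt_const |].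
  intros y _; apply phi_le_inv_sqrt_2PI.
- rewrite (RInt_const (V := R_CompleteNormedModule)).
  unfold scal; simpl; unfold mult; simpl; field; generalize sqrt_2PI_gt0; lra.
Qed.

Lemma is_derive_gauss_primitive_scaled w :
  is_derive (fun v => GaussIntegral.gauss_primitive (v / sqrt 2) / sqrt PI) w (phi w).
Proof.
assert (s2 : 0 < sqrt 2) by (apply sqrt_lt_R0; lra).
assert (sPI : 0 < sqrt PI) by apply sqrt_lt_R0, PI_RGT_0.
assert (D := proj2 (is_derive_Reals _ _ _)
                (GaussIntegral.derivable_pt_lim_gauss_primitive (w / sqrt 2))).
auto_derive; [eexists; exact D|].
replace (Derive (fun x => GaussIntegral.gauss_primitive x) (w * / sqrt 2))
  with (exp (- (w / sqrt 2) ^ 2)) by (symmetry; apply is_derive_unique, D).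
replace (- (w / sqrt 2) ^ 2) with (- w ^ 2 / 2).
- unfold phi; rewrite sqrt_mult by (generalize PI_RGT_0; lra).
  field; lra.
- unfold Rdiv; rewrite Rpow_mult_distr, pow_inv, pow2_sqrt by lra.
  ring.
Qed.

Lemma Phi0_gauss_primitive w :
  Phi0 w = (GaussIntegral.gauss_primitive (w / sqrt 2) - GaussIntegral.gauss_primitive 0) / sqrt PI.
Proof.
assert (sPI : 0 < sqrt PI) by apply sqrt_lt_R0, PI_RGT_0.
assert (I := is_RInt_derive (V := R_CompleteNormedModule) _ phi 0 w
               (fun v _ => is_derive_gauss_primitive_scaled v) (fun v _ => continuous_phi v)).
unfold Phi0; rewrite (is_RInt_unique _ _ _ _ I).
unfold minus, plus, opp; simpl.
replace (0 / sqrt 2) with 0 by (unfold Rdiv; ring).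
field; lra.
Qed.

Lemma is_lim_Phi0 : is_lim Phi0 p_infty (1 / 2).
Proof.
assert (s2 : 0 < / sqrt 2) by (apply Rinv_0_lt_compat, sqrt_lt_R0; lra).
assert (sPI : 0 < sqrt PI) by apply sqrt_lt_R0, PI_RGT_0.
set (G y := GaussIntegral.gauss_primitive y - GaussIntegral.gauss_primitive 0).
apply (is_lim_ext (fun w => G (/ sqrt 2 * w + 0) * / sqrt PI)).
{ intro w; rewrite Phi0_gauss_primitive; unfold G, Rdiv.
  rewrite Rplus_0_r, (Rmult_comm (/ sqrt 2)); reflexivity. }
replace (Finite (1 / 2)) with (Rbar_mult (sqrt PI / 2) (/ sqrt PI))
  by (simpl; f_equal; field; lra).
apply is_lim_scal_r, is_lim_comp_lin; [|lra].
replace (Rbar_plus (Rbar_mult (/ sqrt 2) p_infty) 0) with p_infty.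
- apply GaussIntegral.is_lim_gauss_primitive.
- rewrite Rbar_plus_0_r; symmetry.
  apply is_Rbar_mult_unique, is_Rbar_mult_sym, is_Rbar_mult_p_infty_pos; exact s2.
Qed.

Lemma is_lim_Phi0_m_infty : is_lim Phi0 m_infty (- (1 / 2)).
Proof.
apply (is_lim_ext (fun y => - Phi0 (- y))).
{ intro y; rewrite Phi0_opp, Ropp_involutive; ring. }
apply (is_lim_opp _ _ (1 / 2)), (is_lim_comp _ _ _ _ p_infty).
- apply is_lim_Phi0.
- apply (is_lim_opp _ _ m_infty), is_lim_id.
- exists 0; intros y _; discriminate.
Qed.

Lemma Phi_Phi0 z : Phi z = 1 / 2 + Phi0 z.
Proof.
assert (DPhi0 : forall x, Derive Phi0 x = phi x)
  by (intro x; apply is_derive_unique, is_derive_Phi0).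
assert (G : is_RInt_gen (V := R_NormedModule) (Derive Phi0)
              (Rbar_locally m_infty) (at_point z) (Phi0 z - - (1 / 2))).
{ apply is_RInt_gen_Derive.
  - apply filter_forall; intros ab x _; eexists; apply is_derive_Phi0.
  - apply filter_forall; intros ab x _.
    apply (continuous_ext (T := R_UniformSpace) (U := R_UniformSpace) phi);
      [intro y; symmetry; apply DPhi0 | apply continuous_phi].
  - apply is_lim_Phi0_m_infty.
  - intros P HP; exact (locally_singleton _ _ HP). }
apply (is_RInt_gen_ext (V := R_NormedModule) _ phi) in G.
- unfold Phi; rewrite (is_RInt_gen_unique (V := R_CompleteNormedModule) _ _ G); ring.
- apply filter_forall; intros ab x _; apply DPhi0.
Qed.

Lemma Phi_opp x : Phi (- x) = 1 / 2 - Phi0 x.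
Proof. rewrite Phi_Phi0, Phi0_opp; ring. Qed.

Definition gordon_gap (y : R) : R := 1 / 2 - Phi0 y - y * phi y / (1 + y ^ 2).

Lemma is_derive_gordon_gap y : is_derive gordon_gap y (- 2 * phi y / (1 + y ^ 2) ^ 2).
Proof.
assert (DPhi0 := is_derive_Phi0 y); assert (Dphi := is_derive_phi y).
unfold gordon_gap; auto_derive.
- repeat split; [eexists; exact DPhi0 | eexists; exact Dphi | nra].
- replace (Derive (fun x => Phi0 x) y) with (phi y)
    by (symmetry; apply is_derive_unique, DPhi0).
  replace (Derive (fun x => phi x) y) with (- y * phi y)
    by (symmetry; apply is_derive_unique, Dphi).
  field; nra.
Qed.

Lemma gordon_gap_nonincreasing x y : x <= y -> gordon_gap y <= gordon_gap x.
Proof.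
intros [Hxy|<-]; [|lra].
destruct (MVT_gen gordon_gap x y (fun y => - 2 * phi y / (1 + y ^ 2) ^ 2))
  as [c [_ Hc]].
- intros z _; apply is_derive_gordon_gap.
- intros z _; apply continuity_pt_filterlim.
  apply (ex_derive_continuous (K := R_AbsRing) (V := R_NormedModule)).
  eexists; apply is_derive_gordon_gap.
- assert (Hslope : 0 <= 2 * phi c / (1 + c ^ 2) ^ 2).
  { apply Rle_mult_inv_pos; [generalize (phi_gt0 c); lra | apply pow_lt; nra]. }
  unfold Rdiv in Hc, Hslope; nra.
Qed.

Lemma is_lim_gordon_gap : is_lim gordon_gap p_infty 0.
Proof.
set (c := / sqrt (2 * PI)).
assert (Hc : 0 < c) by apply Rinv_0_lt_compat, sqrt_2PI_gt0.
replace (Finite 0) with (Finite (1 / 2 - 1 / 2 - 0)) by (f_equal; ring).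
apply is_lim_minus'; [apply is_lim_minus'; [apply is_lim_const | apply is_lim_Phi0]|].
apply (is_lim_le_le_loc (fun _ => 0) (fun y => c * / y)).
- exists 0; intros y Hy.
  assert (Hp := phi_gt0 y); assert (Hpc := phi_le_inv_sqrt_2PI y); fold c in Hpc.
  split; [apply Rle_mult_inv_pos; nra |].
  apply (Rmult_le_reg_r (y * (1 + y ^ 2))); [nra|].
  field_simplify; nra.
- apply is_lim_const.
- replace (Finite 0) with (Rbar_mult c (Rbar_inv p_infty)) by (simpl; f_equal; ring).
  apply is_lim_scal_l, is_lim_inv; [apply is_lim_id | discriminate].
Qed.

Lemma gordon_bound x : x * phi x / (1 + x ^ 2) <= Phi (- x).
Proof.
assert (H : Rbar_le 0 (gordon_gap x)).
{ apply (is_lim_le_loc gordon_gap (fun _ => gordon_gap x) p_infty).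
  - exists x; intros y Hy; apply gordon_gap_nonincreasing; lra.
  - apply is_lim_gordon_gap.
  - apply is_lim_const. }
simpl in H; unfold gordon_gap in H; rewrite Phi_opp; lra.
Qed.

Lemma PI_bounds : 3 < PI < 347 / 100.
Proof.
split; [generalize PI2_3_2; lra|].
destruct (PI_ineq 1) as [_ H]; simpl in H; unfold tg_alt, PI_tg in H; simpl in H; lra.
Qed.

Lemma inv_sqrt_2PI_sqr_lt : / sqrt (2 * PI) * / sqrt (2 * PI) < 1 / 6.
Proof.
rewrite <- Rinv_mult, sqrt_sqrt by (generalize PI_RGT_0; lra).
generalize PI_bounds; intro; rewrite Rdiv_1_l; apply Rinv_lt_contravar; lra.
Qed.

Lemma inv_sqrt_2PI_ge : 100 / 264 <= / sqrt (2 * PI).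
Proof.
replace (100 / 264) with (/ (264 / 100)) by field.
apply Rinv_le_contravar; [apply sqrt_2PI_gt0|].
rewrite <- (sqrt_pow2 (264 / 100)) by lra; apply sqrt_le_1_alt.
generalize PI_bounds; lra.
Qed.

Lemma one_sub_pow4_lt_phi x : 22 / 25 <= x -> 1 - x ^ 4 < 2 * x * phi x.
Proof.
intro Hx.
assert (Hp := phi_gt0 x).
destruct (Rlt_le_dec x 1) as [Hx1|Hx1].
- assert (HE := exp_opp_ge_pow4 (x ^ 2 / 2) ltac:(nra)).
  assert (Hc := inv_sqrt_2PI_ge).
  rewrite phi_eq in *.
  set (E := exp (- (x ^ 2 / 2))) in *; set (c := / sqrt (2 * PI)) in *.
  assert (HcE : 100 / 264 * (1 - x ^ 2 / 2 / 4) ^ 4 <= c * E)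
    by (apply Rmult_le_compat; try apply pow_le; nra).
  destruct (Rle_lt_dec x (23 / 25)) as [Hx2|Hx2].
  + assert ((8942 / 10000) ^ 4 <= (1 - x ^ 2 / 2 / 4) ^ 4) by (apply pow_incr; nra).
    assert ((22 / 25) ^ 4 <= x ^ 4) by (apply pow_incr; lra).
    nra.
  + assert ((7 / 8) ^ 4 <= (1 - x ^ 2 / 2 / 4) ^ 4) by (apply pow_incr; nra).
    assert ((23 / 25) ^ 4 <= x ^ 4) by (apply pow_incr; lra).
    nra.
- assert (1 <= x ^ 4) by (apply pow_R1_Rle; lra).
  nra.
Qed.

Lemma tail_ineq_of_gordon x p t : 0 < x -> 0 < p -> 1 - x ^ 4 < 2 * x * p ->
  x * p / (1 + x ^ 2) <= t <= 1 / 2 -> p < 2 * t * (x * (1 - t) + p).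
Proof.
intros Hx Hp Hx4 [HLt Ht].
set (L := x * p / (1 + x ^ 2)) in *.
assert (HL : 0 < L) by (apply Rdiv_lt_0_compat; nra).
assert (HgL : 2 * L * (x * (1 - L) + p) - p = p * (x ^ 4 - 1 + 2 * x * p) / (1 + x ^ 2) ^ 2)
  by (unfold L; field; nra).
assert (HgL_pos : 0 < p * (x ^ 4 - 1 + 2 * x * p) / (1 + x ^ 2) ^ 2)
  by (apply Rdiv_lt_0_compat; [apply Rmult_lt_0_compat | apply pow_lt]; nra).
assert (Hmono : 2 * L * (x * (1 - L) + p) <= 2 * t * (x * (1 - t) + p)).
{ assert (0 <= (t - L) * (x + p - x * (t + L))) by (apply Rmult_le_pos; nra).
  nra. }
lra.
Qed.

Lemma tail_ineq_large x : 22 / 25 <= x ->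
  phi x < 2 * Phi (- x) * (x * (1 - Phi (- x)) + phi x).
Proof.
intro Hx.
apply tail_ineq_of_gordon; [lra | apply phi_gt0 | apply one_sub_pow4_lt_phi, Hx |].
split; [apply gordon_bound|].
rewrite Phi_opp; generalize (Phi0_ge0 x); lra.
Qed.

Lemma tail_ineq_small x : 0 < x <= 22 / 25 ->
  phi x < 2 * Phi (- x) * (x * (1 - Phi (- x)) + phi x).
Proof.
intros Hx.
rewrite Phi_opp.
assert (HA0 := Phi0_ge0 x ltac:(lra)); assert (HA := Phi0_le x ltac:(lra)).
assert (HE := exp_ineq1_le_opp (x ^ 2 / 2)).
assert (Hc2 := inv_sqrt_2PI_sqr_lt).
assert (Hc : 0 < / sqrt (2 * PI)) by apply Rinv_0_lt_compat, sqrt_2PI_gt0.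
rewrite phi_eq; unfold Rdiv in HA; rewrite Rmult_comm in HA.
set (A := Phi0 x) in *; set (c := / sqrt (2 * PI)) in *; set (E := exp (- (x ^ 2 / 2))) in *.
assert (HE0 : 0 < E) by apply exp_pos.
assert (Hx2E : x ^ 2 + E < 3 / 2).
{ assert (Hx2 : x ^ 2 <= (22 / 25) ^ 2) by (apply pow_incr; lra).
  assert (x ^ 2 + E - 3 / 2 < 0 \/ 0 <= x ^ 2 + E - 3 / 2) as [|Hnonneg] by lra; [lra|].
  assert (0 <= (x ^ 2 + E - 3 / 2) * (1 + x ^ 2 / 2)) by (apply Rmult_le_pos; nra).
  nra. }
assert (HA2 : x * A ^ 2 <= x * (c * x) ^ 2) by (apply Rmult_le_compat_l; [|apply pow_incr]; lra).
assert (HpA : c * E * A <= c * E * (c * x)) by (apply Rmult_le_compat_l; nra).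
assert (Hk : c * c * (x ^ 2 + E) < 1 / 4) by nra.
assert (4 * x * A ^ 2 + 4 * (c * E) * A < x) by nra.
nra.
Qed.

Lemma half_sub_l_mul x :
  x / 2 - l x * (1 / 2 - Phi (- x)) = 2 * Phi (- x) * (x * (1 - Phi (- x)) + phi x) - phi x.
Proof. unfold l; field. Qed.

Theorem lemma16 : forall x : R, 0 < x ->
  l x * (1 / 2 - Phi (- x)) / x < 1 / 2.
Proof.
intros x Hx.
assert (Htail : phi x < 2 * Phi (- x) * (x * (1 - Phi (- x)) + phi x)).
{ destruct (Rle_lt_dec x (22 / 25)).
  - apply tail_ineq_small; lra.
  - apply tail_ineq_large; lra. }
apply Rlt_div_l; [exact Hx|].
generalize (half_sub_l_mul x); lra.
Qed.
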